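(* The projection $S_{12}$ consists precisely of the points $(d_1,d_2)\in\mathbb{R}^2$ such that $d_1\ge0$, $d_2\ge0$ and $d_1+d_2\le 3/4$.
   Context: For a finite graph $G$ and a $k$-vertex graph $H$, $d(H,G)$ is the probability that a uniformly random $k$-element subset of $V(G)$ induces a subgraph isomorphic to $H$. For $k\in\{0,1,2,3\}$ let $H_k$ be the 3-vertex graph with exactly $k$ edges. Let $S\subseteq\mathbb{R}^4$ be the set of all $(d_0,d_1,d_2,d_3)$ such that for every $\varepsilon>0$ and every $n\in\mathbb{N}$ there is a graph $G$ with at least $n$ vertices satisfying $|d(H_k,G)-d_k|\le\varepsilon$ for $k=0,1,2,3$. For $i<j$, $S_{ij}=\{(d_i,d_j):(d_0,d_1,d_2,d_3)\in S\}$. *)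

From Stdlib Require Import Reals Lra Lia List Arith.
Import ListNotations.
Open Scope R_scope.

(* A finite simple graph on vertex set {0, ..., gn - 1}: a symmetric,
   irreflexive boolean adjacency relation (values outside the vertex
   range are irrelevant). *)
Record graph : Type := Graph {
  gn : nat;
  gadj : nat -> nat -> bool;
  gadj_sym : forall i j, gadj i j = gadj j i;
  gadj_irr : forall i, gadj i i = false
}.

(* All 3-element subsets {i,j,k} of {0,...,n-1}, listed once each as i<j<k. *)
Definition triples (n : nat) : list (nat * nat * nat) :=
  flat_map (fun k => flat_map (fun j => map (fun i => (i, j, k)) (seq 0 j))
                               (seq 0 k))
           (seq 0 n).

Definition edges3 (G : graph) (t : nat * nat * nat) : nat :=
  let '(i, j, k) := t in
  Nat.b2n (gadj G i j) + Nat.b2n (gadj G i k) + Nat.b2n (gadj G j k).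

(* H_m = the 3-vertex graph with exactly m edges (unique up to isomorphism);
   a 3-set induces a copy of H_m iff it spans exactly m edges.
   dens G m = d(H_m, G): probability that a uniformly random 3-subset of V(G)
   induces a copy of H_m. *)
Definition dens (G : graph) (m : nat) : R :=
  INR (length (filter (fun t => Nat.eqb (edges3 G t) m) (triples (gn G))))
  / INR (length (triples (gn G))).

Definition inS (d0 d1 d2 d3 : R) : Prop :=
  forall eps : R, eps > 0 -> forall N : nat,
    exists G : graph, (N <= gn G)%nat /\
      Rabs (dens G 0 - d0) <= eps /\ Rabs (dens G 1 - d1) <= eps /\
      Rabs (dens G 2 - d2) <= eps /\ Rabs (dens G 3 - d3) <= eps.

Definition inS12 (d1 d2 : R) : Prop :=
  exists d0 d3 : R, inS d0 d1 d2 d3.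

(* Goodman's count: a 3-set spans one or two edges iff exactly two of its vertices see
   the other two vertices differently (one neighbour, one non-neighbour).  A vertex of
   degree d plays this role for d (n - 1 - d) <= (n - 1)^2 / 4 pairs, so
   d1 + d2 <= 3/4 + O(1/n).

   Conversely, the densities of blow-ups of a fixed pattern with part proportions x tend
   to a cubic polynomial in x, so every value of that polynomial lies in S.  One pattern
   on five parts suffices: two cliques joined completely to two further parts that are
   joined to each other, plus an isolated part.  With proportions
   (s t, s t, s (1/2 - t), s (1/2 - t), 1 - s) every non-isolated vertex has degree s n / 2,
   so d1 + d2 = (3/4) s^2 (2 - s), while d2 decreases from (3/4) s^3 to 0 as t goes from
   0 to 1/2; above (3/4) s^3 the complete bipartite graphs K(pn, qn) plus isolated
   vertices take over.  Both parameters are found by the intermediate value theorem. *)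

From Stdlib Require Import Reals Lra Lia List ZArith.
Import ListNotations.

Open Scope nat_scope.

(** * Counting triples *)

Fixpoint sumn (n : nat) (f : nat -> nat) : nat :=
  match n with 0 => 0 | S n' => sumn n' f + f n' end.

Lemma sumn_ext n f g : (forall i, i < n -> f i = g i) -> sumn n f = sumn n g.
Proof.
  induction n as [|n IH]; intros H; simpl; [reflexivity|].
  rewrite IH, H; [reflexivity|lia|intros i Hi; apply H; lia].
Qed.

Lemma sumn_le n f g : (forall i, i < n -> f i <= g i) -> sumn n f <= sumn n g.
Proof.
  induction n as [|n IH]; intros H; simpl; [lia|].
  specialize (IH (fun i Hi => H i ltac:(lia))); specialize (H n ltac:(lia)); lia.
Qed.

Lemma sumn_add n f g : sumn n (fun i => f i + g i) = sumn n f + sumn n g.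
Proof. induction n; simpl; lia. Qed.

Lemma sumn_mul_l n c f : sumn n (fun i => c * f i) = c * sumn n f.
Proof. induction n; simpl; nia. Qed.

Lemma sumn_mul_r n c f : sumn n (fun i => f i * c) = sumn n f * c.
Proof. induction n; simpl; nia. Qed.

Lemma sumn_const n c : sumn n (fun _ => c) = n * c.
Proof. induction n; simpl; lia. Qed.

Lemma sumn_split a b f : sumn (a + b) f = sumn a f + sumn b (fun i => f (a + i)).
Proof.
  induction b as [|b IH]; simpl; [rewrite Nat.add_0_r; lia|].
  rewrite Nat.add_succ_r; simpl; rewrite IH; lia.
Qed.

Lemma sumn_shift n f : sumn (S n) f = f 0 + sumn n (fun i => f (S i)).
Proof. change (S n) with (1 + n); rewrite sumn_split; reflexivity. Qed.

Lemma sumn_telescope n g :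
  (forall i, i < n -> g i <= g (S i)) -> sumn n (fun i => g (S i) - g i) = g n - g 0.
Proof.
  intros Hg.
  assert (Hmono : forall i, i <= n -> g 0 <= g i).
  { induction i as [|i IH]; intros Hi; [lia|].
    specialize (Hg i ltac:(lia)); specialize (IH ltac:(lia)); lia. }
  induction n as [|n IH]; simpl; [lia|].
  rewrite IH; [|intros i Hi; apply Hg; lia|intros i Hi; apply Hmono; lia].
  specialize (Hg n ltac:(lia)); specialize (Hmono n ltac:(lia)); lia.
Qed.

Definition ind_neq (i j : nat) : nat := if i =? j then 0 else 1.

Definition ind_distinct (i j k : nat) : nat := ind_neq i j * ind_neq i k * ind_neq j k.

Lemma ind_neq_refl i : ind_neq i i = 0.
Proof. unfold ind_neq; rewrite Nat.eqb_refl; reflexivity. Qed.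

Lemma ind_neq_sym i j : ind_neq i j = ind_neq j i.
Proof. unfold ind_neq; rewrite Nat.eqb_sym; reflexivity. Qed.

Lemma ind_neq_lt i n : i < n -> ind_neq i n = 1.
Proof. intros H; unfold ind_neq; destruct (Nat.eqb_spec i n); lia. Qed.

Lemma sumn_ind_neq i n : i < n -> sumn n (fun j => ind_neq i j) = n - 1.
Proof.
  induction n as [|n IH]; intros Hi; simpl; [lia|].
  destruct (Nat.eq_dec i n) as [->|Hin].
  - rewrite ind_neq_refl, (sumn_ext _ _ (fun _ => 1)), sumn_const
      by (intros j Hj; rewrite ind_neq_sym; apply ind_neq_lt; lia); lia.
  - rewrite IH, ind_neq_lt by lia; lia.
Qed.

Definition sum2_neq n (g : nat -> nat -> nat) : nat :=
  sumn n (fun i => sumn n (fun j => ind_neq i j * g i j)).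

Lemma sum2_neq_pairs n g :
  sum2_neq n g = sumn n (fun j => sumn j (fun i => g i j + g j i)).
Proof.
  unfold sum2_neq; induction n as [|n IH]; [reflexivity|].
  simpl; rewrite sumn_add, <- IH, ind_neq_refl.
  rewrite (sumn_ext n (fun i => ind_neq i n * g i n) (fun i => g i n))
    by (intros; rewrite ind_neq_lt by lia; lia).
  rewrite (sumn_ext n (fun j => ind_neq n j * g n j) (fun j => g n j))
    by (intros; rewrite ind_neq_sym, ind_neq_lt by lia; lia).
  rewrite sumn_add, Nat.mul_0_l, Nat.add_0_r, Nat.add_assoc; reflexivity.
Qed.

Definition sum3 n (f : nat -> nat -> nat -> nat) : nat :=
  sumn n (fun i => sumn n (fun j => sumn n (fun k => f i j k))).

Definition sum_incr3 n (f : nat -> nat -> nat -> nat) : nat :=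
  sumn n (fun k => sumn k (fun j => sumn j (fun i => f i j k))).

Lemma sum3_ext n f g :
  (forall i j k, i < n -> j < n -> k < n -> f i j k = g i j k) -> sum3 n f = sum3 n g.
Proof.
  intros H; unfold sum3; apply sumn_ext; intros i Hi; apply sumn_ext; intros j Hj.
  apply sumn_ext; intros k Hk; auto.
Qed.

Lemma sum3_le n f g :
  (forall i j k, i < n -> j < n -> k < n -> f i j k <= g i j k) -> sum3 n f <= sum3 n g.
Proof.
  intros H; unfold sum3; apply sumn_le; intros i Hi; apply sumn_le; intros j Hj.
  apply sumn_le; intros k Hk; auto.
Qed.

Lemma sum3_add n f g :
  sum3 n (fun i j k => f i j k + g i j k) = sum3 n f + sum3 n g.
Proof.
  unfold sum3; rewrite <- sumn_add; apply sumn_ext; intros i _.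
  rewrite <- sumn_add; apply sumn_ext; intros j _; apply sumn_add.
Qed.

Lemma sum3_const n c : sum3 n (fun _ _ _ => c) = n * (n * (n * c)).
Proof. unfold sum3; rewrite !sumn_const; reflexivity. Qed.

Lemma sum_incr3_ext n f g :
  (forall i j k, i < j -> j < k -> k < n -> f i j k = g i j k) ->
  sum_incr3 n f = sum_incr3 n g.
Proof.
  intros H; unfold sum_incr3; apply sumn_ext; intros k Hk; apply sumn_ext; intros j Hj.
  apply sumn_ext; intros i Hi; auto.
Qed.

Lemma sum_incr3_add n f g :
  sum_incr3 n (fun i j k => f i j k + g i j k) = sum_incr3 n f + sum_incr3 n g.
Proof.
  unfold sum_incr3; rewrite <- sumn_add; apply sumn_ext; intros k _.
  rewrite <- sumn_add; apply sumn_ext; intros j _; apply sumn_add.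
Qed.

Lemma sum_incr3_mul_l n c f :
  sum_incr3 n (fun i j k => c * f i j k) = c * sum_incr3 n f.
Proof.
  unfold sum_incr3; rewrite <- sumn_mul_l; apply sumn_ext; intros k _.
  rewrite <- sumn_mul_l; apply sumn_ext; intros j _; apply sumn_mul_l.
Qed.

Definition sym6 (f : nat -> nat -> nat -> nat) i j k : nat :=
  f i j k + f i k j + f j i k + f j k i + f k i j + f k j i.

Lemma ind_distinct_succ n i j : i < n -> j < n ->
  ind_distinct i j n = ind_neq i j /\ ind_distinct i n j = ind_neq i j /\
  ind_distinct n i j = ind_neq i j /\ ind_distinct i n n = 0 /\
  ind_distinct n i n = 0 /\ ind_distinct n n i = 0.
Proof.
  intros Hi Hj; unfold ind_distinct.
  rewrite (ind_neq_sym n i), (ind_neq_sym n j), (ind_neq_lt i n), (ind_neq_lt j n), ind_neq_refl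
    by lia; lia.
Qed.

Lemma sum3_distinct_succ n f :
  sum3 (S n) (fun i j k => ind_distinct i j k * f i j k) =
  sum3 n (fun i j k => ind_distinct i j k * f i j k) +
  sum2_neq n (fun i j => f i j n) + sum2_neq n (fun i k => f i n k) +
  sum2_neq n (fun j k => f n j k).
Proof.
  unfold sum3, sum2_neq; simpl.
  rewrite (sumn_ext n (fun i => _ + _) (fun i =>
     sumn n (fun j => sumn n (fun k => ind_distinct i j k * f i j k)) +
     sumn n (fun j => ind_neq i j * f i j n) + sumn n (fun k => ind_neq i k * f i n k))).
  2:{ intros i Hi; rewrite sumn_add; f_equal; [f_equal|].
      - apply sumn_ext; intros j Hj; now destruct (ind_distinct_succ n i j) as [-> _].
      - destruct (ind_distinct_succ n i i) as (_ & _ & _ & -> & _); [lia|lia|].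
        rewrite Nat.add_0_r; apply sumn_ext; intros k Hk.
        now destruct (ind_distinct_succ n i k) as (_ & -> & _). }
  rewrite (sumn_ext n
    (fun j => sumn n (fun k => ind_distinct n j k * f n j k) + ind_distinct n j n * f n j n)
    (fun j => sumn n (fun k => ind_neq j k * f n j k))).
  2:{ intros j Hj; destruct (ind_distinct_succ n j j) as (_ & _ & _ & _ & -> & _); [lia|lia|].
      rewrite Nat.add_0_r; apply sumn_ext; intros k Hk.
      now destruct (ind_distinct_succ n j k) as (_ & _ & -> & _). }
  rewrite (sumn_ext n (fun k => ind_distinct n n k * f n n k) (fun _ => 0)).
  2:{ intros k Hk; now destruct (ind_distinct_succ n k k) as (_ & _ & _ & _ & _ & ->). }
  assert (ind_distinct n n n = 0) as -> by (unfold ind_distinct; rewrite ind_neq_refl; lia).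
  rewrite sumn_const, !sumn_add; lia.
Qed.

Lemma sum3_distinct n f :
  sum3 n (fun i j k => ind_distinct i j k * f i j k) = sum_incr3 n (sym6 f).
Proof.
  induction n as [|n IH]; [reflexivity|].
  rewrite sum3_distinct_succ, IH, !sum2_neq_pairs; unfold sum_incr3; simpl.
  rewrite <- !Nat.add_assoc; f_equal; rewrite <- !sumn_add; apply sumn_ext; intros j _.
  rewrite <- !sumn_add; apply sumn_ext; intros i _; unfold sym6; lia.
Qed.

Lemma length_filter_map {A} (p : A -> bool) (h : nat -> A) n :
  length (filter p (map h (seq 0 n))) = sumn n (fun i => Nat.b2n (p (h i))).
Proof.
  induction n as [|n IH]; [reflexivity|].
  rewrite seq_S, map_app, filter_app, length_app, IH; simpl.
  destruct (p (h n)); simpl; lia.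
Qed.

Lemma length_filter_flat_map {A} (p : A -> bool) (F : nat -> list A) n :
  length (filter p (flat_map F (seq 0 n))) = sumn n (fun k => length (filter p (F k))).
Proof.
  induction n as [|n IH]; [reflexivity|].
  rewrite seq_S, flat_map_app, filter_app, length_app, IH; simpl.
  rewrite app_nil_r; reflexivity.
Qed.

Lemma length_filter_triples p n :
  length (filter p (triples n)) = sum_incr3 n (fun i j k => Nat.b2n (p (i, j, k))).
Proof.
  unfold triples; rewrite length_filter_flat_map; apply sumn_ext; intros k _.
  rewrite length_filter_flat_map; apply sumn_ext; intros j _; apply length_filter_map.
Qed.

Lemma length_filter_triples_sym (p : nat * nat * nat -> bool) n :
  (forall i j k, p (j, i, k) = p (i, j, k)) -> (forall i j k, p (i, k, j) = p (i, j, k)) ->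
  6 * length (filter p (triples n)) =
  sum3 n (fun i j k => ind_distinct i j k * Nat.b2n (p (i, j, k))).
Proof.
  intros Hl Hr; rewrite sum3_distinct, length_filter_triples, <- sum_incr3_mul_l.
  apply sum_incr3_ext; intros i j k _ _ _; unfold sym6.
  rewrite (Hr k i j), (Hl i k j), (Hr j i k), (Hl i j k), (Hr i j k); lia.
Qed.

Lemma sum_id_double k : 2 * sumn k (fun j => j) = k * (k - 1).
Proof. induction k as [|k IH]; simpl; [lia|]; destruct k; simpl in *; nia. Qed.

Lemma length_triples n : 6 * length (triples n) = n * (n - 1) * (n - 2).
Proof.
  rewrite <- (filter_true (triples n)), length_filter_triples; unfold sum_incr3; simpl.
  rewrite (sumn_ext n _ (fun k => sumn k (fun j => j)))
    by (intros k _; apply sumn_ext; intros j _; rewrite sumn_const; lia).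
  induction n as [|n IH]; [reflexivity|]; simpl sumn.
  pose proof (sum_id_double n); destruct n as [|[|n]]; simpl in *; nia.
Qed.

(** * Goodman's count *)

Definition count (G : graph) (m : nat) : nat :=
  length (filter (fun t => edges3 G t =? m) (triples (gn G))).

Definition deg (G : graph) (i : nat) : nat := sumn (gn G) (fun k => Nat.b2n (gadj G i k)).

Definition mixed (G : graph) (i j k : nat) : nat :=
  if Bool.eqb (gadj G i j) (gadj G i k) then 0 else 1.

Lemma sym6_mixed G i j k :
  sym6 (mixed G) i j k =
  4 * (Nat.b2n (edges3 G (i, j, k) =? 1) + Nat.b2n (edges3 G (i, j, k) =? 2)).
Proof.
  unfold sym6, mixed, edges3.
  rewrite (gadj_sym G j i), (gadj_sym G k i), (gadj_sym G k j).
  destruct (gadj G i j), (gadj G i k), (gadj G j k); reflexivity.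
Qed.

(* With [a] and [c] the indicators of the neighbours and of the other non-neighbours of [i],
   [ind_distinct i j k * mixed G i j k = a j * c k + c j * a k]. *)
Lemma sum_mixed_at G i : i < gn G ->
  sumn (gn G) (fun j => sumn (gn G) (fun k => ind_distinct i j k * mixed G i j k)) =
  2 * (deg G i * (gn G - 1 - deg G i)).
Proof.
  intros Hi.
  set (a j := Nat.b2n (gadj G i j)); set (c j := ind_neq i j * (1 - a j)).
  assert (Hc : sumn (gn G) c = gn G - 1 - deg G i).
  { rewrite <- (sumn_ind_neq i (gn G) Hi); unfold deg.
    enough (sumn (gn G) c + sumn (gn G) a = sumn (gn G) (fun j => ind_neq i j))
      by (fold a; lia).
    rewrite <- sumn_add; apply sumn_ext; intros j _; unfold c, a, ind_neq.
    destruct (Nat.eqb_spec i j) as [<-|]; [rewrite gadj_irr|destruct (gadj G i j)];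
      reflexivity. }
  rewrite (sumn_ext _ _ (fun j => a j * sumn (gn G) c + c j * sumn (gn G) a)).
  - rewrite sumn_add, sumn_mul_r, sumn_mul_r, Hc; unfold deg; fold a; lia.
  - intros j _; rewrite <- !sumn_mul_l, <- sumn_add; apply sumn_ext; intros k _.
    unfold c, a, mixed, ind_distinct, ind_neq.
    destruct (Nat.eqb_spec i j) as [<-|];
      [rewrite gadj_irr; destruct (gadj G i k); reflexivity|].
    destruct (Nat.eqb_spec i k) as [<-|];
      [rewrite gadj_irr; destruct (gadj G i j); reflexivity|].
    destruct (Nat.eqb_spec j k) as [<-|];
      [destruct (gadj G i j)|destruct (gadj G i j), (gadj G i k)]; reflexivity.
Qed.

Lemma four_mul_sub_le_square d m : 4 * (d * (m - d)) <= m * m.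
Proof.
  destruct (Nat.le_gt_cases d m) as [Hdm|Hdm]; [|replace (m - d) with 0 by lia; lia].
  pose proof (Z.square_nonneg (Z.of_nat d - Z.of_nat (m - d))); nia.
Qed.

Lemma count1_count2_le G : 8 * (count G 1 + count G 2) <= gn G * ((gn G - 1) * (gn G - 1)).
Proof.
  assert (H4 : 4 * (count G 1 + count G 2) =
          sum3 (gn G) (fun i j k => ind_distinct i j k * mixed G i j k)).
  { rewrite sum3_distinct; unfold count; rewrite !length_filter_triples.
    rewrite <- sum_incr3_add, <- sum_incr3_mul_l; apply sum_incr3_ext; intros.
    rewrite sym6_mixed; reflexivity. }
  assert (Hle : 2 * sum3 (gn G) (fun i j k => ind_distinct i j k * mixed G i j k) <=
                sumn (gn G) (fun _ => (gn G - 1) * (gn G - 1))).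
  { unfold sum3; rewrite <- sumn_mul_l; apply sumn_le; intros i Hi.
    rewrite sum_mixed_at by exact Hi.
    pose proof (four_mul_sub_le_square (deg G i) (gn G - 1)); lia. }
  rewrite sumn_const in Hle; lia.
Qed.

(** * Blow-ups *)

Fixpoint blk (l : list nat) (i : nat) : nat :=
  match l with
  | [] => 0
  | s :: l' => if i <? s then 0 else S (blk l' (i - s))
  end.

Lemma sumn_blk l psi :
  sumn (list_sum l) (fun i => psi (blk l i)) = sumn (length l) (fun a => nth a l 0 * psi a).
Proof.
  revert psi; induction l as [|s l IH]; intros psi; [reflexivity|].
  change (list_sum (s :: l)) with (s + list_sum l); cbn [length].
  rewrite sumn_split, sumn_shift; cbn [nth]; rewrite <- (IH (fun a => psi (S a))).
  f_equal.
  - rewrite (sumn_ext _ _ (fun _ => psi 0)), sumn_const; [simpl; lia|].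
    intros i Hi; simpl; destruct (Nat.ltb_spec i s); [reflexivity|lia].
  - apply sumn_ext; intros i _; simpl; destruct (Nat.ltb_spec (s + i) s); [lia|].
    rewrite Nat.add_comm, Nat.add_sub; reflexivity.
Qed.

Lemma list_sum_nth l : list_sum l = sumn (length l) (fun a => nth a l 0).
Proof.
  rewrite <- (Nat.mul_1_r (list_sum l)), <- sumn_const, (sumn_blk l (fun _ => 1)).
  apply sumn_ext; intros; lia.
Qed.

Lemma list_sum_map_seq f K : list_sum (map f (seq 0 K)) = sumn K f.
Proof.
  induction K as [|K IH]; [reflexivity|].
  rewrite seq_S, map_app, list_sum_app, IH; simpl; lia.
Qed.

Lemma sum3_blk l g :
  sum3 (list_sum l) (fun i j k => g (blk l i) (blk l j) (blk l k)) =
  sumn (length l) (fun a => nth a l 0 * sumn (length l) (fun b => nth b l 0 *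
    sumn (length l) (fun c => nth c l 0 * g a b c))).
Proof.
  unfold sum3; rewrite <- (sumn_blk l (fun a => sumn (length l) (fun b => nth b l 0 *
    sumn (length l) (fun c => nth c l 0 * g a b c)))).
  apply sumn_ext; intros i _; rewrite <- (sumn_blk l (fun b =>
    sumn (length l) (fun c => nth c l 0 * g (blk l i) b c))).
  apply sumn_ext; intros j _; apply (sumn_blk l (fun c => g (blk l i) (blk l j) c)).
Qed.

Lemma sum3_ind_distinct n :
  sum3 n (fun i j k => ind_distinct i j k * 1) = 6 * length (triples n).
Proof.
  rewrite <- (filter_true (triples n)).
  rewrite (length_filter_triples_sym (fun _ => true)) by reflexivity; reflexivity.
Qed.

Definition pat_edges (pat : nat -> nat -> bool) (a b c : nat) : nat :=
  Nat.b2n (pat a b) + Nat.b2n (pat a c) + Nat.b2n (pat b c).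

Section Blowup.

Variable pat : nat -> nat -> bool.
Hypothesis pat_sym : forall a b, pat a b = pat b a.
Variable l : list nat.

(* A loop [pat a a = true] makes part [a] a clique. *)
Definition blowup_adj (i j : nat) : bool := negb (i =? j) && pat (blk l i) (blk l j).

Lemma blowup_adj_sym i j : blowup_adj i j = blowup_adj j i.
Proof. unfold blowup_adj; rewrite Nat.eqb_sym, pat_sym; reflexivity. Qed.

Lemma blowup_adj_irr i : blowup_adj i i = false.
Proof. unfold blowup_adj; rewrite Nat.eqb_refl; reflexivity. Qed.

Definition blowup : graph := Graph (list_sum l) blowup_adj blowup_adj_sym blowup_adj_irr.

Definition blowup_ordered_count (m : nat) : nat :=
  sum3 (list_sum l) (fun i j k => Nat.b2n (pat_edges pat (blk l i) (blk l j) (blk l k) =? m)).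

Lemma six_count_blowup m :
  6 * count blowup m = sum3 (list_sum l) (fun i j k =>
    ind_distinct i j k * Nat.b2n (pat_edges pat (blk l i) (blk l j) (blk l k) =? m)).
Proof.
  unfold count; rewrite length_filter_triples_sym.
  - apply sum3_ext; intros i j k _ _ _; unfold ind_distinct, ind_neq, edges3, pat_edges; simpl.
    unfold blowup_adj.
    destruct (Nat.eqb_spec i j), (Nat.eqb_spec i k), (Nat.eqb_spec j k); simpl; lia.
  - intros i j k; unfold edges3; simpl; rewrite (blowup_adj_sym j i); f_equal; lia.
  - intros i j k; unfold edges3; simpl; rewrite (blowup_adj_sym k j); f_equal; lia.
Qed.

(* [blowup_ordered_count] runs over all ordered triples; those with a repeated vertex number
   [n^3 - n (n - 1) (n - 2)]. *)
Lemma blowup_ordered_count_bounds m :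
  6 * count blowup m <= blowup_ordered_count m /\
  blowup_ordered_count m + 6 * length (triples (list_sum l)) <=
    6 * count blowup m + list_sum l * (list_sum l * list_sum l).
Proof.
  rewrite six_count_blowup; set (n := list_sum l).
  set (phi i j k := Nat.b2n (pat_edges pat (blk l i) (blk l j) (blk l k) =? m)).
  assert (Hsplit : blowup_ordered_count m =
            sum3 n (fun i j k => ind_distinct i j k * phi i j k) +
            sum3 n (fun i j k => (1 - ind_distinct i j k) * phi i j k)).
  { rewrite <- sum3_add; apply sum3_ext; intros i j k _ _ _; unfold phi, ind_distinct, ind_neq.
    destruct (i =? j), (i =? k), (j =? k); simpl; lia. }
  assert (Hrest : sum3 n (fun i j k => (1 - ind_distinct i j k) * phi i j k) +
                  6 * length (triples n) <= n * (n * n)).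
  { rewrite <- sum3_ind_distinct, <- (Nat.mul_1_r (n * (n * n))), <- !Nat.mul_assoc,
      <- sum3_const, <- sum3_add; apply sum3_le; intros i j k _ _ _.
    unfold phi, ind_distinct, ind_neq.
    destruct (_ =? m), (i =? j), (i =? k), (j =? k); simpl; lia. }
  unfold phi in *; cbv beta in *; lia.
Qed.

End Blowup.

Open Scope R_scope.

(** * The upper bound *)

Lemma div_eventually_le c eps :
  0 < eps -> exists N : nat, forall x, INR N <= x -> c / x <= eps.
Proof.
  intros Heps; destruct (INR_unbounded (Rabs c / eps)) as [n0 Hn0].
  exists (S n0); intros x Hx.
  rewrite S_INR in Hx; pose proof (pos_INR n0); pose proof (Rle_abs c).
  assert (Hc : Rabs c < eps * INR n0).
  { apply (Rmult_lt_compat_l eps) in Hn0; [|lra].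
    replace (eps * (Rabs c / eps)) with (Rabs c) in Hn0 by (field; lra); lra. }
  apply (Rmult_le_reg_r x); [lra|]; replace (c / x * x) with c by (field; lra); nra.
Qed.

Lemma Rabs_le_inv a b : Rabs a <= b -> - b <= a <= b.
Proof. unfold Rabs; destruct (Rcase_abs a); lra. Qed.

Lemma dens_count G m : dens G m = INR (count G m) / INR (length (triples (gn G))).
Proof. reflexivity. Qed.

Lemma dens_nonneg G m : 0 <= dens G m.
Proof.
  rewrite dens_count; unfold Rdiv; apply Rmult_le_pos; [apply pos_INR|].
  destruct (Nat.eq_dec (length (triples (gn G))) 0) as [->|Hne].
  - rewrite INR_0, Rinv_0; lra.
  - apply Rlt_le, Rinv_0_lt_compat, lt_0_INR; lia.
Qed.

Lemma dens1_dens2_le G : (3 <= gn G)%nat ->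
  dens G 1 + dens G 2 <= 3 / 4 + 3 / (4 * (INR (gn G) - 2)).
Proof.
  intros H3.
  pose proof (count1_count2_le G) as Hc; pose proof (length_triples (gn G)) as HL.
  apply le_INR in Hc; apply (f_equal INR) in HL.
  rewrite !mult_INR, plus_INR, minus_INR in Hc by lia.
  rewrite !mult_INR, !minus_INR in HL by lia.
  rewrite !dens_count.
  set (n := INR (gn G)) in *; set (L := INR (length (triples (gn G)))) in *.
  assert (Hn : 3 <= n) by (replace 3 with (INR 3) by (simpl; lra); apply le_INR; exact H3).
  replace (INR 8) with 8 in Hc by (simpl; lra); replace (INR 6) with 6 in HL by (simpl; lra).
  replace (INR 2) with 2 in HL by (simpl; lra); simpl INR in Hc, HL.
  assert (HLn : L = n * (n - 1) * (n - 2) / 6) by lra.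
  assert (HLpos : 0 < L)
    by (rewrite HLn; apply Rdiv_lt_0_compat; [repeat apply Rmult_lt_0_compat|]; lra).
  apply (Rmult_le_reg_r L); [exact HLpos|].
  replace ((INR (count G 1) / L + INR (count G 2) / L) * L)
    with (INR (count G 1) + INR (count G 2)) by (field; lra).
  replace ((3 / 4 + 3 / (4 * (n - 2))) * L) with (n * ((n - 1) * (n - 1)) / 8)
    by (rewrite HLn; field; lra).
  lra.
Qed.

Lemma inS12_triangle d1 d2 : inS12 d1 d2 -> 0 <= d1 /\ 0 <= d2 /\ d1 + d2 <= 3 / 4.
Proof.
  intros (d0 & d3 & HS).
  assert (Hnear : forall eps, 0 < eps ->
            0 <= d1 + eps /\ 0 <= d2 + eps /\ d1 + d2 <= 3 / 4 + 3 * eps).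
  { intros eps Heps.
    destruct (div_eventually_le 3 eps Heps) as [N HN].
    destruct (HS eps Heps (N + 3)%nat) as (G & HG & _ & H1 & H2 & _).
    apply Rabs_le_inv in H1; apply Rabs_le_inv in H2.
    pose proof (dens_nonneg G 1); pose proof (dens_nonneg G 2).
    pose proof (dens1_dens2_le G ltac:(lia)) as Hb.
    assert (3 / (4 * (INR (gn G) - 2)) <= eps).
    { apply HN; apply le_INR in HG; rewrite plus_INR in HG; simpl in HG.
      pose proof (pos_INR N); lra. }
    repeat split; lra. }
  repeat split; apply Rle_plus_epsilon; intros eps Heps.
  - apply Hnear; exact Heps.
  - apply Hnear; exact Heps.
  - replace eps with (3 * (eps / 3)) by field; apply Hnear; lra.
Qed.

(** * Limits of blow-up densities *)

Fixpoint sumR (n : nat) (f : nat -> R) : R :=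
  match n with O => 0 | S n' => sumR n' f + f n' end.

Lemma sumR_ext n f g : (forall i, (i < n)%nat -> f i = g i) -> sumR n f = sumR n g.
Proof.
  induction n as [|n IH]; intros H; simpl; [reflexivity|].
  rewrite IH, H; [reflexivity|lia|intros i Hi; apply H; lia].
Qed.

Lemma sumR_le n f g : (forall i, (i < n)%nat -> f i <= g i) -> sumR n f <= sumR n g.
Proof.
  induction n as [|n IH]; intros H; simpl; [lra|].
  specialize (IH (fun i Hi => H i ltac:(lia))); specialize (H n ltac:(lia)); lra.
Qed.

Lemma sumR_add n f g : sumR n (fun i => f i + g i) = sumR n f + sumR n g.
Proof. induction n; simpl; lra. Qed.

Lemma sumR_mul_l n c f : sumR n (fun i => c * f i) = c * sumR n f.
Proof. induction n as [|n IH]; simpl; [|rewrite IH]; ring. Qed.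

Lemma sumR_const n c : sumR n (fun _ => c) = INR n * c.
Proof. induction n as [|n IH]; simpl sumR; [simpl; ring|]; rewrite IH, S_INR; ring. Qed.

Lemma sumR_sub n f g : sumR n (fun i => f i - g i) = sumR n f - sumR n g.
Proof. induction n; simpl; lra. Qed.

Lemma sumR_nonneg n f : (forall i, (i < n)%nat -> 0 <= f i) -> 0 <= sumR n f.
Proof.
  induction n as [|n IH]; intros H; simpl; [lra|].
  specialize (IH (fun i Hi => H i ltac:(lia))); specialize (H n ltac:(lia)); lra.
Qed.

Lemma sumR_abs_le n f : Rabs (sumR n f) <= sumR n (fun i => Rabs (f i)).
Proof.
  induction n as [|n IH]; simpl; [rewrite Rabs_R0; lra|].
  eapply Rle_trans; [apply Rabs_triang|lra].
Qed.

Lemma INR_sumn n f : INR (sumn n f) = sumR n (fun i => INR (f i)).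
Proof. induction n as [|n IH]; simpl; [reflexivity|]; rewrite plus_INR, IH; reflexivity. Qed.

Definition cubic_form (K : nat) (w : nat -> nat -> nat -> R) (x : nat -> R) : R :=
  sumR K (fun a => x a * sumR K (fun b => x b * sumR K (fun c => x c * w a b c))).

Lemma cubic_form_scale K w x r :
  cubic_form K w (fun a => x a * r) = r * r * r * cubic_form K w x.
Proof.
  unfold cubic_form; rewrite <- sumR_mul_l; apply sumR_ext; intros a _.
  rewrite (sumR_ext _ _ (fun b => r * r * (x b * sumR K (fun c => x c * w a b c)))),
    sumR_mul_l; [ring|].
  intros b _; rewrite (sumR_ext _ _ (fun c => r * (x c * w a b c))), sumR_mul_l; [ring|].
  intros c _; ring.
Qed.

Definition pattern_dens (pat : nat -> nat -> bool) (K : nat) (x : nat -> R) (m : nat) : R :=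
  cubic_form K (fun a b c => INR (Nat.b2n (pat_edges pat a b c =? m))) x.

Section Perturbation.

Variable K : nat.
Variables x y : nat -> R.
Hypothesis x_nonneg : forall a, (a < K)%nat -> 0 <= x a.
Hypothesis y_nonneg : forall a, (a < K)%nat -> 0 <= y a.
Hypothesis x_sum_le : sumR K x <= 1.
Hypothesis y_sum_le : sumR K y <= 1.

Lemma weighted_sum_unit (F : nat -> R) :
  (forall a, (a < K)%nat -> 0 <= F a <= 1) -> 0 <= sumR K (fun a => y a * F a) <= 1.
Proof.
  intros HF; split.
  - apply sumR_nonneg; intros a Ha; specialize (HF a Ha); specialize (y_nonneg a Ha); nra.
  - eapply Rle_trans; [|exact y_sum_le]; apply sumR_le; intros a Ha.
    specialize (HF a Ha); specialize (y_nonneg a Ha); nra.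
Qed.

Lemma weighted_sum_pert (F G : nat -> R) d :
  0 <= d -> (forall a, (a < K)%nat -> 0 <= F a <= 1) ->
  (forall a, (a < K)%nat -> Rabs (F a - G a) <= d) ->
  Rabs (sumR K (fun a => y a * F a) - sumR K (fun a => x a * G a)) <=
  sumR K (fun a => Rabs (y a - x a)) + d.
Proof.
  intros Hd HF HFG; rewrite <- sumR_sub.
  eapply Rle_trans; [apply sumR_abs_le|].
  eapply Rle_trans with (sumR K (fun a => Rabs (y a - x a) + d * x a)).
  - apply sumR_le; intros a Ha.
    replace (y a * F a - x a * G a) with ((y a - x a) * F a + x a * (F a - G a)) by ring.
    eapply Rle_trans; [apply Rabs_triang|]; rewrite !Rabs_mult.
    specialize (HF a Ha); specialize (HFG a Ha); specialize (x_nonneg a Ha).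
    rewrite (Rabs_right (x a)), (Rabs_right (F a)) by lra.
    pose proof (Rabs_pos (y a - x a)); nra.
  - rewrite sumR_add, sumR_mul_l; nra.
Qed.

Lemma cubic_form_pert w :
  (forall a b c, (a < K)%nat -> (b < K)%nat -> (c < K)%nat -> 0 <= w a b c <= 1) ->
  Rabs (cubic_form K w y - cubic_form K w x) <= 3 * sumR K (fun a => Rabs (y a - x a)).
Proof.
  intros Hw; set (E := sumR K (fun a => Rabs (y a - x a))).
  assert (HE : 0 <= E) by (apply sumR_nonneg; intros; apply Rabs_pos).
  unfold cubic_form; replace (3 * E) with (E + (E + (E + 0))) by ring.
  apply weighted_sum_pert; [lra| |].
  { intros a Ha; apply weighted_sum_unit; intros b Hb; apply weighted_sum_unit; auto. }
  intros a Ha; apply weighted_sum_pert; [lra| |].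
  { intros b Hb; apply weighted_sum_unit; auto. }
  intros b Hb; apply weighted_sum_pert; [lra|auto|].
  intros c Hc; rewrite Rminus_diag, Rabs_R0; lra.
Qed.

End Perturbation.

Lemma ratio_gap c D p F :
  0 <= c <= D -> 0 < D <= p -> c <= F <= c + (p - D) ->
  Rabs (c / D - F / p) <= (p - D) / p.
Proof.
  intros Hc HD HF; assert (Hp : 0 < p) by lra.
  assert (Hinv : 0 < / (D * p)) by (apply Rinv_0_lt_compat; nra).
  assert (H1 : c / D - c / p = c * (p - D) * / (D * p)) by (field; lra).
  assert (H2 : (p - D) / p - (c / D - c / p) = (D - c) * (p - D) * / (D * p)) by (field; lra).
  assert (H3 : (p - D) / p - (F / p - c / p) = (p - D - (F - c)) * / p) by (field; lra).
  assert (0 <= c * (p - D) * / (D * p)) by (apply Rmult_le_pos; nra).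
  assert (0 <= (D - c) * (p - D) * / (D * p)) by (apply Rmult_le_pos; nra).
  assert (0 <= (p - D - (F - c)) * / p)
    by (apply Rmult_le_pos; [lra|left; apply Rinv_0_lt_compat, Hp]).
  assert (F / p - c / p = (F - c) * / p) by (field; lra).
  assert (0 <= (F - c) * / p) by (apply Rmult_le_pos; [lra|left; apply Rinv_0_lt_compat, Hp]).
  apply Rabs_le; split; lra.
Qed.

Lemma INR_blowup_ordered_count pat l m :
  INR (blowup_ordered_count pat l m) =
  pattern_dens pat (length l) (fun a => INR (nth a l 0%nat)) m.
Proof.
  unfold blowup_ordered_count.
  rewrite (sum3_blk l (fun a b c => Nat.b2n (pat_edges pat a b c =? m))), INR_sumn.
  apply sumR_ext; intros a _.
  rewrite mult_INR, INR_sumn; f_equal; apply sumR_ext; intros b _.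
  rewrite mult_INR, INR_sumn; f_equal; apply sumR_ext; intros c _.
  rewrite mult_INR; reflexivity.
Qed.

Lemma dens_blowup_approx pat pat_sym l m :
  (3 <= list_sum l)%nat ->
  Rabs (dens (blowup pat pat_sym l) m -
        pattern_dens pat (length l) (fun a => INR (nth a l 0%nat) / INR (list_sum l)) m)
  <= 3 / INR (list_sum l).
Proof.
  intros H3.
  destruct (blowup_ordered_count_bounds pat pat_sym l m) as [Hlo Hhi].
  pose proof (length_triples (list_sum l)) as HL.
  pose proof (filter_length_le (fun t => edges3 (blowup pat pat_sym l) t =? m)%nat
                (triples (list_sum l))) as Hcount.
  change (count (blowup pat pat_sym l) m <= length (triples (list_sum l)))%nat in Hcount.
  rewrite dens_count; unfold pattern_dens, Rdiv; rewrite cubic_form_scale;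
    fold (pattern_dens pat (length l) (fun a => INR (nth a l 0%nat)) m);
    rewrite <- INR_blowup_ordered_count; simpl gn.
  set (n := list_sum l) in *; set (N := count (blowup pat pat_sym l) m) in *;
    set (L := length (triples n)) in *; set (F := blowup_ordered_count pat l m) in *.
  assert (Hn : 3 <= INR n) by (replace 3 with (INR 3) by (simpl; lra); apply le_INR; exact H3).
  assert (HLR : 6 * INR L = INR n * (INR n - 1) * (INR n - 2)).
  { replace 6 with (INR 6) by (simpl; lra).
    rewrite <- mult_INR, HL, !mult_INR, !minus_INR by lia; simpl; ring. }
  apply le_INR in Hlo, Hhi, Hcount.
  rewrite mult_INR in Hlo; rewrite !plus_INR, !mult_INR in Hhi.
  replace (INR 6) with 6 in Hlo, Hhi by (simpl; lra).
  replace (INR N * / INR L) with ((6 * INR N) / (6 * INR L)) by (field; nra).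
  replace (/ INR n * / INR n * / INR n * INR F) with (INR F / (INR n * INR n * INR n))
    by (field; lra).
  pose proof (pos_INR N).
  eapply Rle_trans; [apply ratio_gap; [split|split|split]; nra|].
  replace ((INR n * INR n * INR n - 6 * INR L) / (INR n * INR n * INR n))
    with (3 / INR n - 2 / (INR n * INR n)) by (rewrite HLR; field; lra).
  assert (0 <= 2 / (INR n * INR n))
    by (apply Rmult_le_pos; [lra|left; apply Rinv_0_lt_compat; nra]).
  lra.
Qed.

Definition nfloor (r : R) : nat := Z.to_nat (Zfloor r).

Lemma nfloor_spec r : 0 <= r -> INR (nfloor r) <= r < INR (nfloor r) + 1.
Proof.
  intros Hr; unfold nfloor; pose proof (Zfloor_bound r).
  assert (0 <= Zfloor r)%Z by (apply Zfloor_lub; exact Hr).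
  rewrite INR_IZR_INZ, Z2Nat.id by assumption; lra.
Qed.

Lemma nfloor_le r s : 0 <= r <= s -> (nfloor r <= nfloor s)%nat.
Proof.
  intros Hrs; pose proof (nfloor_spec r ltac:(lra)); pose proof (nfloor_spec s ltac:(lra)).
  enough (nfloor r < nfloor s + 1)%nat by lia.
  apply INR_lt; rewrite plus_INR; simpl; lra.
Qed.

Lemma nfloor_INR n : nfloor (INR n) = n.
Proof. unfold nfloor; rewrite INR_IZR_INZ, ZfloorZ, Nat2Z.id; reflexivity. Qed.

(* Part [a] gets [floor (n (x_0 + ... + x_a)) - floor (n (x_0 + ... + x_{a-1}))] vertices:
   rounding the partial sums keeps the total exactly [n]. *)
Definition round_size (x : nat -> R) (n a : nat) : nat :=
  nfloor (INR n * sumR (S a) x) - nfloor (INR n * sumR a x).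

Definition round_sizes (K : nat) (x : nat -> R) (n : nat) : list nat :=
  map (round_size x n) (seq 0 K).

Section Rounding.

Variable K : nat.
Variable x : nat -> R.
Hypothesis x_nonneg : forall a, (a < K)%nat -> 0 <= x a.
Hypothesis x_sum : sumR K x = 1.
Variable n : nat.

Lemma partial_sum_nonneg a : (a <= K)%nat -> 0 <= sumR a x.
Proof. intros Ha; apply sumR_nonneg; intros; apply x_nonneg; lia. Qed.

Lemma round_sizes_length : length (round_sizes K x n) = K.
Proof. unfold round_sizes; rewrite length_map, length_seq; reflexivity. Qed.

Lemma nth_round_sizes a : (a < K)%nat -> nth a (round_sizes K x n) 0%nat = round_size x n a.
Proof.
  intros Ha; unfold round_sizes.
  rewrite nth_indep with (d' := round_size x n 0) by (rewrite length_map, length_seq; exact Ha).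
  rewrite map_nth, seq_nth by exact Ha; reflexivity.
Qed.

Lemma round_sizes_sum : list_sum (round_sizes K x n) = n.
Proof.
  unfold round_sizes; rewrite list_sum_map_seq; unfold round_size.
  pose proof (sumn_telescope K (fun a => nfloor (INR n * sumR a x))) as Htel; cbv beta in Htel.
  rewrite Htel.
  - simpl sumR; rewrite x_sum, Rmult_0_r, Rmult_1_r, <- INR_0, !nfloor_INR; lia.
  - intros a Ha; apply nfloor_le; pose proof (pos_INR n).
    pose proof (partial_sum_nonneg a ltac:(lia)); pose proof (x_nonneg a Ha); simpl; nra.
Qed.

Lemma round_sizes_error : (0 < n)%nat ->
  sumR K (fun a => Rabs (INR (nth a (round_sizes K x n) 0%nat) / INR n - x a))
  <= INR K / INR n.
Proof.
  intros Hn; assert (HnR : 0 < INR n) by (apply lt_0_INR; exact Hn).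
  replace (INR K / INR n) with (sumR K (fun _ => 1 / INR n))
    by (rewrite sumR_const; field; lra).
  apply sumR_le; intros a Ha; rewrite nth_round_sizes by exact Ha; unfold round_size.
  pose proof (partial_sum_nonneg a ltac:(lia)); pose proof (x_nonneg a Ha).
  destruct (nfloor_spec (INR n * sumR a x)) as [Hlo0 Hhi0]; [nra|].
  destruct (nfloor_spec (INR n * sumR (S a) x)) as [Hlo1 Hhi1]; [simpl; nra|].
  rewrite minus_INR by (apply nfloor_le; simpl; nra); simpl sumR in *.
  apply Rabs_le; split; apply (Rmult_le_reg_r (INR n)); try exact HnR;
    unfold Rdiv; field_simplify; nra.
Qed.

End Rounding.

Lemma pattern_dens_pert pat K x y m :
  (forall a, (a < K)%nat -> 0 <= x a) -> (forall a, (a < K)%nat -> 0 <= y a) ->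
  sumR K x <= 1 -> sumR K y <= 1 ->
  Rabs (pattern_dens pat K y m - pattern_dens pat K x m) <=
  3 * sumR K (fun a => Rabs (y a - x a)).
Proof.
  intros Hx Hy Hxs Hys; apply cubic_form_pert; auto.
  intros a b c _ _ _; destruct (pat_edges pat a b c =? m)%nat; simpl; lra.
Qed.

Lemma dens_blowup_round_approx pat (pat_sym : forall a b, pat a b = pat b a) K x n m :
  (forall a, (a < K)%nat -> 0 <= x a) -> sumR K x = 1 -> (3 <= n)%nat ->
  Rabs (dens (blowup pat pat_sym (round_sizes K x n)) m - pattern_dens pat K x m)
  <= (3 + 3 * INR K) / INR n.
Proof.
  intros Hx Hsum Hn.
  set (l := round_sizes K x n).
  assert (Hl : list_sum l = n) by exact (round_sizes_sum K x Hx Hsum n).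
  assert (Hlen : length l = K) by apply round_sizes_length.
  assert (HnR : 0 < INR n) by (apply lt_0_INR; lia).
  set (y a := INR (nth a l 0%nat) / INR n).
  assert (Hy : forall a, (a < K)%nat -> 0 <= y a).
  { intros a _; unfold y, Rdiv; apply Rmult_le_pos; [apply pos_INR|].
    left; apply Rinv_0_lt_compat, HnR. }
  assert (Hysum : sumR K y = 1).
  { unfold y, Rdiv.
    rewrite (sumR_ext _ _ (fun a => / INR n * INR (nth a l 0%nat))) by (intros; ring).
    rewrite sumR_mul_l, <- INR_sumn, <- Hlen, <- list_sum_nth, Hl; field; lra. }
  pose proof (dens_blowup_approx pat pat_sym l m) as Hd.
  rewrite Hl, Hlen in Hd; specialize (Hd ltac:(lia)); fold y in Hd.
  pose proof (pattern_dens_pert pat K x y m Hx Hy ltac:(lra) ltac:(lra)) as Hp.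
  assert (He : sumR K (fun a => Rabs (y a - x a)) <= INR K / INR n)
    by exact (round_sizes_error K x Hx n ltac:(lia)).
  replace ((3 + 3 * INR K) / INR n) with (3 / INR n + 3 * (INR K / INR n)) by (field; lra).
  replace (dens (blowup pat pat_sym l) m - pattern_dens pat K x m) with
    ((dens (blowup pat pat_sym l) m - pattern_dens pat K y m) +
     (pattern_dens pat K y m - pattern_dens pat K x m)) by ring.
  eapply Rle_trans; [apply Rabs_triang|]; lra.
Qed.

Lemma blowup_limit_inS pat (pat_sym : forall a b, pat a b = pat b a) K x :
  (forall a, (a < K)%nat -> 0 <= x a) -> sumR K x = 1 ->
  inS (pattern_dens pat K x 0) (pattern_dens pat K x 1)
      (pattern_dens pat K x 2) (pattern_dens pat K x 3).
Proof.
  intros Hx Hsum eps Heps N.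
  destruct (div_eventually_le (3 + 3 * INR K) eps Heps) as [n0 Hn0].
  set (n := (N + n0 + 3)%nat).
  exists (blowup pat pat_sym (round_sizes K x n)); simpl gn.
  rewrite round_sizes_sum by assumption.
  assert (Hb : (3 + 3 * INR K) / INR n <= eps) by (apply Hn0, le_INR; lia).
  split; [lia|].
  repeat split; (eapply Rle_trans; [apply dens_blowup_round_approx; auto; lia|exact Hb]).
Qed.

(** * Filling the triangle *)

Definition pat5 (a b : nat) : bool :=
  match a, b with
  | 0, 0 | 1, 1 | 0, 2 | 2, 0 | 1, 3 | 3, 1 | 2, 3 | 3, 2 => true
  | _, _ => false
  end%nat.

Lemma pat5_sym a b : pat5 a b = pat5 b a.
Proof. destruct a as [|[|[|[|a]]]], b as [|[|[|[|b]]]]; reflexivity. Qed.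

Definition weights5 (x0 x1 x2 x3 x4 : R) (a : nat) : R := nth a [x0; x1; x2; x3; x4] 0.

Lemma inS12_pat5 x0 x1 x2 x3 x4 :
  0 <= x0 -> 0 <= x1 -> 0 <= x2 -> 0 <= x3 -> 0 <= x4 -> x0 + x1 + x2 + x3 + x4 = 1 ->
  inS12 (pattern_dens pat5 5 (weights5 x0 x1 x2 x3 x4) 1)
        (pattern_dens pat5 5 (weights5 x0 x1 x2 x3 x4) 2).
Proof.
  intros H0 H1 H2 H3 H4 Hs.
  exists (pattern_dens pat5 5 (weights5 x0 x1 x2 x3 x4) 0),
         (pattern_dens pat5 5 (weights5 x0 x1 x2 x3 x4) 3).
  apply (blowup_limit_inS pat5 pat5_sym).
  - intros a Ha; unfold weights5; destruct a as [|[|[|[|[|a]]]]]; simpl; [lra..|lia].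
  - unfold weights5; simpl; lra.
Qed.

Lemma family1_dens s t :
  pattern_dens pat5 5 (weights5 (s * t) (s * t) (s * (1/2 - t)) (s * (1/2 - t)) (1 - s)) 1 =
    3/4 * s^2 * (2 - s) - s^3 * (3/4 - 3 * (3 * t^2 - 4 * t^3)) /\
  pattern_dens pat5 5 (weights5 (s * t) (s * t) (s * (1/2 - t)) (s * (1/2 - t)) (1 - s)) 2 =
    s^3 * (3/4 - 3 * (3 * t^2 - 4 * t^3)).
Proof. unfold pattern_dens, cubic_form, weights5; simpl; split; field. Qed.

Lemma family2_dens p q :
  pattern_dens pat5 5 (weights5 0 0 p q (1 - p - q)) 1 = 6 * (p * q) * (1 - (p + q)) /\
  pattern_dens pat5 5 (weights5 0 0 p q (1 - p - q)) 2 = 3 * (p * q) * (p + q).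
Proof. unfold pattern_dens, cubic_form, weights5; simpl; split; ring. Qed.

Lemma sq_mul_two_sub_le s t : 0 <= s <= t -> t <= 1 -> s^2 * (2 - s) <= t^2 * (2 - t).
Proof.
  intros Hst Ht.
  assert (t^2 * (2 - t) - s^2 * (2 - s) = (t - s) * (t * (2 - t - s) + s * (2 - s))) by ring.
  assert (0 <= t * (2 - t - s) + s * (2 - s)) by nra.
  nra.
Qed.

Lemma sq_mul_two_sub_surj T :
  0 <= T <= 3/4 -> exists s, 0 <= s <= 1 /\ 3/4 * s^2 * (2 - s) = T.
Proof.
  intros HT.
  destruct (IVT_cor (fun s => 3/4 * s^2 * (2 - s) - T) 0 1) as (s & Hs & Heq);
    [reg|lra|simpl; nra|].
  exists s; split; [exact Hs|lra].
Qed.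

Lemma quadratic_roots sigma pi :
  0 <= sigma -> 0 <= pi -> 4 * pi <= sigma^2 ->
  exists p q, 0 <= p /\ 0 <= q /\ p + q = sigma /\ p * q = pi.
Proof.
  intros Hs Hp Hd; set (r := sqrt (sigma^2 - 4 * pi)).
  assert (Hr : r * r = sigma^2 - 4 * pi) by (apply sqrt_sqrt; lra).
  assert (Hr0 : 0 <= r) by apply sqrt_pos.
  assert (Hrs : r <= sigma) by nra.
  exists ((sigma + r) / 2), ((sigma - r) / 2); repeat split; nra.
Qed.

Lemma family1_hits s d2 :
  0 <= s <= 1 -> 0 <= d2 <= 3/4 * s^3 -> inS12 (3/4 * s^2 * (2 - s) - d2) d2.
Proof.
  intros Hs Hd2.
  destruct (IVT_cor (fun t => s^3 * (3/4 - 3 * (3 * t^2 - 4 * t^3)) - d2) 0 (1/2))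
    as (t & Ht & Heq); [reg|lra|simpl in *; nra|].
  destruct (family1_dens s t) as [E1 E2].
  replace d2 with (s^3 * (3/4 - 3 * (3 * t^2 - 4 * t^3))) by lra.
  rewrite <- E1, <- E2; apply inS12_pat5; nra.
Qed.

(* [d1 = 6 p q (1 - (p + q))] and [d2 = 3 p q (p + q)] determine [p q = (d1 + 2 d2) / 6]
   and [p + q = 2 d2 / (d1 + 2 d2)]. *)
Lemma family2_hits d1 d2 :
  0 <= d1 -> 0 < d2 -> (d1 + 2 * d2)^3 <= 6 * d2^2 -> inS12 d1 d2.
Proof.
  intros Hd1 Hd2 Hu; set (u := d1 + 2 * d2) in *.
  assert (Hupos : 0 < u) by (unfold u; lra).
  set (sigma := 2 * d2 / u).
  assert (Hsu : sigma * u = 2 * d2) by (unfold sigma; field; lra).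
  assert (Hs1 : 0 <= sigma <= 1) by (split; apply (Rmult_le_reg_r u); unfold u in *; nra).
  destruct (quadratic_roots sigma (u / 6)) as (p & q & Hp & Hq & Hpq & Hpq').
  - lra.
  - lra.
  - apply (Rmult_le_reg_r (u * u)); [nra|].
    replace (sigma^2 * (u * u)) with ((sigma * u)^2) by ring; rewrite Hsu.
    simpl in *; nra.
  - destruct (family2_dens p q) as [E1 E2].
    rewrite Hpq, Hpq' in E1, E2.
    replace d1 with (6 * (u / 6) * (1 - sigma)) by (unfold u in *; nra).
    replace d2 with (3 * (u / 6) * sigma) by nra.
    rewrite <- E1, <- E2; apply inS12_pat5; lra.
Qed.

Lemma family2_condition s d1 d2 :
  0 <= s <= 1 -> 0 <= d1 -> d1 + d2 = 3/4 * s^2 * (2 - s) -> 3/4 * s^3 < d2 ->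
  (d1 + 2 * d2)^3 <= 6 * d2^2.
Proof.
  intros Hs Hd1 HT Hd2; set (u := d1 + 2 * d2).
  assert (Hupos : 0 < u) by (unfold u; nra).
  set (sigma := 2 * d2 / u).
  assert (Hsu : sigma * u = 2 * d2) by (unfold sigma; field; lra).
  assert (Hs1 : sigma <= 1) by (apply (Rmult_le_reg_r u); unfold u in *; nra).
  assert (Hss : s <= sigma).
  { apply (Rmult_le_reg_r u); [exact Hupos|]; rewrite Hsu; unfold u; simpl in *; nra. }
  pose proof (sq_mul_two_sub_le s sigma ltac:(lra) Hs1) as Hmono.
  assert (Hsq : 2 * u / 3 <= sigma^2).
  { apply (Rmult_le_reg_r (2 - sigma)); [lra|].
    replace (2 * u / 3 * (2 - sigma)) with (4 / 3 * (d1 + d2)) by (unfold u in *; nra).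
    nra. }
  apply (Rmult_le_compat_r (u * u)) in Hsq; [|nra].
  replace (sigma^2 * (u * u)) with ((sigma * u)^2) in Hsq by ring; rewrite Hsu in Hsq.
  simpl in *; nra.
Qed.

Lemma triangle_subset_inS12 d1 d2 :
  0 <= d1 -> 0 <= d2 -> d1 + d2 <= 3/4 -> inS12 d1 d2.
Proof.
  intros Hd1 Hd2 HT.
  destruct (sq_mul_two_sub_surj (d1 + d2)) as (s & Hs & Hlevel); [lra|].
  destruct (Rle_lt_dec d2 (3/4 * s^3)) as [Hsmall|Hlarge].
  - replace d1 with (3/4 * s^2 * (2 - s) - d2) by lra; apply family1_hits; lra.
  - apply family2_hits; [exact Hd1|simpl in *; nra|].
    apply (family2_condition s); lra.
Qed.

Theorem theorem13 (d1 d2 : R) :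
  inS12 d1 d2 <-> (0 <= d1 /\ 0 <= d2 /\ d1 + d2 <= 3 / 4).
Proof.
  split.
  - apply inS12_triangle.
  - intros (Hd1 & Hd2 & HT); apply triangle_subset_inS12; assumption.
Qed.
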